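(* If $G$ is a traceable graph (i.e. $G$ has a Hamilton path) of order $n\geq 3$, then $px_k(G)=2$ for each integer $k$ with $3\leq k\leq n$.
   Context: All graphs are finite, simple, undirected and connected. An edge-coloring of a graph assigns a color to each edge (adjacent edges may receive the same color). A tree in an edge-colored graph is proper if any two adjacent edges of the tree receive different colors. For $S\subseteq V(G)$, an $S$-tree is a subgraph of $G$ that is a tree containing all vertices of $S$. For a connected graph $G$ of order $n$ and an integer $k$ with $2\le k\le n$, an edge-coloring of $G$ is a $k$-proper coloring if for every set $S$ of $k$ vertices of $G$ there exists a proper $S$-tree in $G$. The $k$-proper index $px_k(G)$ is the minimum number of colors used in a $k$-proper coloring of $G$. *)

From mathcomp Require Import all_boot.
Set Implicit Arguments. Unset Strict Implicit. Unset Printing Implicit Defensive.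

(* A simple graph on a finite vertex type T is a symmetric irreflexive
   relation e : rel T.  An edge is the 2-element set [set x; y] with e x y. *)
Section Graphs.
Variable T : finType.

Definition edges (e : rel T) : {set {set T}} :=
  [set E : {set T} | [exists x, exists y, e x y && (E == [set x; y])]].

(* An edge-coloring assigns a natural number (a color) to each edge;
   values on non-edges are irrelevant. *)
Definition coloring := {set T} -> nat.

Definition ncolors (e : rel T) (c : coloring) : nat :=
  size (undup [seq c E | E <- enum (edges e)]).

Definition adjF (F : {set {set T}}) : rel T :=
  fun u v => (u != v) && ([set u; v] \in F).

(* (A, F) is a subgraph of G that is a tree:
   - every edge of F is an edge of G with both endpoints in A,
   - A is nonempty and connected using edges of F,
   - F is acyclic: no edge {x,y} of F lies on a cycle, i.e. x and y are not
     connected in F minus that edge. *)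
Definition is_subtree (e : rel T) (A : {set T}) (F : {set {set T}}) : Prop :=
  [/\ F \subset edges e,
      forall E, E \in F -> E \subset A,
      A != set0,
      forall x y, x \in A -> y \in A -> connect (adjF F) x y
    & forall x y, x != y -> [set x; y] \in F ->
        ~~ connect (adjF (F :\ [set x; y])) x y].

Definition proper_edges (c : coloring) (F : {set {set T}}) : Prop :=
  forall E1 E2, E1 \in F -> E2 \in F -> E1 != E2 ->
    E1 :&: E2 != set0 -> c E1 != c E2.

Definition k_proper_coloring (e : rel T) (k : nat) (c : coloring) : Prop :=
  forall S : {set T}, #|S| = k ->
    exists (A : {set T}) (F : {set {set T}}),
      [/\ is_subtree e A F, S \subset A & proper_edges c F].

Definition is_proper_index (e : rel T) (k m : nat) : Prop :=
  (exists c, k_proper_coloring e k c /\ ncolors e c = m) /\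
  (forall c, k_proper_coloring e k c -> m <= ncolors e c).

Definition traceable (e : rel T) : Prop :=
  exists (x : T) (p : seq T), [/\ path e x p, uniq (x :: p) & size (x :: p) = #|T|].

Definition connected_graph (e : rel T) : Prop := forall x y : T, connect e x y.
End Graphs.

From mathcomp Require Import all_boot.
From mathcomp Require Import zify.

Set Implicit Arguments. Unset Strict Implicit. Unset Printing Implicit Defensive.

(* Upper bound: the edges of a Hamilton path form a spanning tree, and coloring
   them alternately 1, 2, 1, 2, ... along the path makes it proper, so a single
   2-coloring serves every vertex set S.  Lower bound: a tree containing three
   vertices has two adjacent edges, which a proper tree must color differently. *)

Lemma adjF_sym (T : finType) (F : {set {set T}}) : symmetric (adjF F).
Proof. by move=> a b; rewrite /adjF eq_sym setUC. Qed.

Section HamiltonPath.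
Variables (T : finType) (e : rel T) (x : T) (p : seq T).
Hypotheses (e_path : path e x p) (p_uniq : uniq (x :: p))
           (p_size : size (x :: p) = #|T|).

Definition pos (v : T) : nat := index v (x :: p).
Definition vtx (i : nat) : T := nth x (x :: p) i.
Definition has_next (u : T) : bool := (pos u).+1 < #|T|.
Definition path_edge (u : T) : {set T} := [set u; vtx (pos u).+1].
Definition path_edges : {set {set T}} := path_edge @: [set u | has_next u].

Definition alt_coloring : coloring T := fun E =>
  if [exists u, [&& has_next u, E == path_edge u & odd (pos u)]] then 2 else 1.

Lemma mem_hamilton_path v : v \in x :: p.
Proof.
have /subset_cardP : #|x :: p| = #|T| by rewrite -p_size (card_uniqP p_uniq).
by move=> /(_ (subset_predT _)) ->.
Qed.

Lemma pos_lt v : pos v < #|T|.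
Proof. by rewrite /pos -p_size index_mem mem_hamilton_path. Qed.

Lemma vtxK v : vtx (pos v) = v.
Proof. by rewrite /vtx /pos nth_index // mem_hamilton_path. Qed.

Lemma posK i : i < #|T| -> pos (vtx i) = i.
Proof. by move=> hi; rewrite /pos /vtx index_uniq // p_size. Qed.

Lemma pos_inj : injective pos.
Proof. by move=> a b h; rewrite -(vtxK a) -(vtxK b) h. Qed.

Lemma pos_next u : has_next u -> pos (vtx (pos u).+1) = (pos u).+1.
Proof. exact: posK. Qed.

Lemma mem_path_edge z u : has_next u -> z \in path_edge u ->
  pos z = pos u \/ pos z = (pos u).+1.
Proof.
move=> hu; rewrite in_set2 => /orP[/eqP->|/eqP->]; first by left.
by right; rewrite pos_next.
Qed.

Lemma path_edge_inj u w : has_next u -> has_next w ->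
  path_edge u = path_edge w -> u = w.
Proof.
move=> hu hw Euw.
have uw : u \in path_edge w by rewrite -Euw set21.
have wu : w \in path_edge u by rewrite Euw set21.
by apply: pos_inj; move: (mem_path_edge hw uw) (mem_path_edge hu wu); lia.
Qed.

Lemma mem_path_edges E :
  reflect (exists2 u, has_next u & E = path_edge u) (E \in path_edges).
Proof.
apply: (iffP imsetP) => [[u]|[u hu ->]]; last by exists u; rewrite ?inE.
by rewrite inE; exists u.
Qed.

Lemma alt_coloring_path_edge u : has_next u ->
  alt_coloring (path_edge u) = if odd (pos u) then 2 else 1.
Proof.
move=> hu; rewrite /alt_coloring; case: existsP => [[w /and3P[hw /eqP Euw odd_w]]|].
  by rewrite (path_edge_inj hu hw Euw) odd_w.
by case: ifP => // odd_u []; exists u; rewrite hu eqxx odd_u.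
Qed.

Lemma path_edge_in_edges u : has_next u -> path_edge u \in edges e.
Proof.
move=> hu; rewrite inE; apply/existsP; exists u; apply/existsP.
exists (vtx (pos u).+1); rewrite eqxx andbT -{1}(vtxK u).
by apply: (pathP x e_path); rewrite /has_next -p_size in hu.
Qed.

Lemma path_edges_sub : path_edges \subset edges e.
Proof. by apply/subsetP => E /mem_path_edges[u hu ->]; apply: path_edge_in_edges. Qed.

Lemma connect_path_vtx i : i < #|T| -> connect (adjF path_edges) x (vtx i).
Proof.
elim: i => [|i IH] hi //; apply: connect_trans (IH (ltnW hi)) (connect1 _).
have pos_i : pos (vtx i) = i by apply: posK; apply: ltnW.
apply/andP; split.
  by apply/negP => /eqP /(f_equal pos); rewrite pos_i posK //; lia.
apply/mem_path_edges; exists (vtx i); first by rewrite /has_next pos_i.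
by rewrite /path_edge pos_i.
Qed.

Lemma path_edges_connected a b : connect (adjF path_edges) a b.
Proof.
have conn_x v : connect (adjF path_edges) x v.
  by rewrite -(vtxK v); apply/connect_path_vtx/pos_lt.
apply: connect_trans (conn_x b).
by rewrite (sym_connect_sym (@adjF_sym _ path_edges)).
Qed.

(* Removing the edge at position [pos u] splits the path into the initial
   segment [{v | pos v <= pos u}] and the rest, with no edge in between. *)
Lemma path_edges_acyclic a b : a != b -> [set a; b] \in path_edges ->
  ~~ connect (adjF (path_edges :\ [set a; b])) a b.
Proof.
move=> ab /mem_path_edges[u hu Eab].
have fab : pos a != pos b by apply: contra ab => /eqP /pos_inj ->.
have [ha hb] : a \in path_edge u /\ b \in path_edge u by rewrite -Eab set21 set22.
have segment_closed :
    closed (adjF (path_edges :\ [set a; b])) [pred v | pos v <= pos u].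
  move=> v w /andP[vw]; rewrite in_setD1 => /andP[ne /mem_path_edges[z hz Evw]].
  have fvw : pos v != pos w by apply: contra vw => /eqP /pos_inj ->.
  have [hv hw] : v \in path_edge z /\ w \in path_edge z by rewrite -Evw set21 set22.
  have zu : pos z != pos u by apply: contra ne => /eqP /pos_inj zu; rewrite Evw zu Eab.
  rewrite !inE; move: (mem_path_edge hz hv) (mem_path_edge hz hw) fvw zu.
  by case=> ->; case=> ->; rewrite ?eqxx //; lia.
apply/negP => /(closed_connect segment_closed); rewrite !inE.
by move: (mem_path_edge hu ha) (mem_path_edge hu hb) fab; case=> ->; case=> ->;
  rewrite ?eqxx //; lia.
Qed.

Lemma path_edges_subtree : is_subtree e setT path_edges.
Proof.
split.
- exact: path_edges_sub.
- by move=> E _; apply: subsetT.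
- by apply/set0Pn; exists x; rewrite inE.
- by move=> a b _ _; apply: path_edges_connected.
- exact: path_edges_acyclic.
Qed.

Lemma alt_coloring_proper : proper_edges alt_coloring path_edges.
Proof.
move=> _ _ /mem_path_edges[u hu ->] /mem_path_edges[w hw ->] ne /set0Pn[z].
rewrite inE => /andP[zu zw].
have uw : pos u != pos w by apply: contra ne => /eqP /pos_inj ->.
rewrite !alt_coloring_path_edge //.
have [-> | ->] : pos u = (pos w).+1 \/ pos w = (pos u).+1.
  by move: (mem_path_edge hu zu) (mem_path_edge hw zw); lia.
all: by rewrite /=; case: odd.
Qed.

Lemma ncolors_alt_coloring : 3 <= #|T| -> ncolors e alt_coloring = 2.
Proof.
move=> T_ge3.
have pos_vtx i : i < 2 -> pos (vtx i) = i by move=> hi; apply: posK; lia.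
have next_vtx i : i < 2 -> has_next (vtx i).
  by move=> hi; rewrite /has_next pos_vtx //; lia.
have colors : undup [seq alt_coloring E | E <- enum (edges e)] =i [:: 1; 2].
  move=> z; rewrite mem_undup; apply/mapP/idP => [[E _ ->]|].
    by rewrite /alt_coloring; case: ifP.
  rewrite !inE => /orP[] /eqP ->; [exists (path_edge (vtx 0)) | exists (path_edge (vtx 1))];
    rewrite ?mem_enum ?path_edge_in_edges ?alt_coloring_path_edge ?pos_vtx ?next_vtx //.
by rewrite /ncolors (perm_size (uniq_perm (undup_uniq _) (isT : uniq [:: 1; 2]) colors)).
Qed.

End HamiltonPath.

Lemma traceable_two_coloring (T : finType) (e : rel T) :
  traceable e -> 3 <= #|T| ->
  exists c, (forall k, k_proper_coloring e k c) /\ ncolors e c = 2.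
Proof.
case=> x [p [e_path p_uniq p_size]] T_ge3.
exists (alt_coloring x p); split; last exact: ncolors_alt_coloring.
move=> k S _; exists setT, (path_edges x p); split.
- exact: path_edges_subtree.
- exact: subsetT.
- exact: alt_coloring_proper e_path p_uniq p_size.
Qed.

Lemma connect_exit (T : finType) (r : rel T) (P : {pred T}) a b :
  connect r a b -> a \in P -> b \notin P ->
  exists v w, [/\ r v w, v \in P & w \notin P].
Proof.
move=> /connectP[q]; elim: q a => [|z q IH] a /=; first by move=> _ -> ->.
move=> /andP[r_az r_q] b_last aP bP; case: (boolP (z \in P)) => [zP|zNP].
  exact: IH r_q b_last zP bP.
by exists a, z.
Qed.

Lemma card_lt_notin (T : finType) (S B : {set T}) :
  #|B| < #|S| -> exists2 z, z \in S & z \notin B.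
Proof.
move=> BS; have /subsetPn[z zS zB] : ~~ (S \subset B).
  by apply: contraTN BS => /subset_leq_card; rewrite leqNgt.
by exists z.
Qed.

(* Leaving [{a}] and then [{a, w}] on the way to two further vertices of [A]
   yields two distinct edges that share a vertex. *)
Lemma connected_adjacent_edges (T : finType) (A : {set T}) (F : {set {set T}}) :
  (forall x y, x \in A -> y \in A -> connect (adjF F) x y) -> 3 <= #|A| ->
  exists E1 E2, [/\ E1 \in F, E2 \in F, E1 != E2 & E1 :&: E2 != set0].
Proof.
move=> A_conn A_ge3.
have [a aA _] : exists2 a, a \in A & a \notin set0.
  by apply: card_lt_notin; rewrite cards0; lia.
have [b bA ba] : exists2 b, b \in A & b \notin [set a].
  by apply: card_lt_notin; rewrite cards1; lia.
have [v0 [w [/andP[_ awF] /set1P va wa]]] :=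
  connect_exit (P := mem [set a]) (A_conn _ _ aA bA) (set11 a) ba.
subst v0.
have [z zA zaw] : exists2 z, z \in A & z \notin [set a; w].
  by apply: card_lt_notin; rewrite cards2; case: (a != w); lia.
have [v [v' [/andP[_ vv'F] vaw v'aw]]] :=
  connect_exit (P := mem [set a; w]) (A_conn _ _ aA zA) (set21 a w) zaw.
exists [set a; w], [set v; v']; split=> //.
  by apply: contraNneq v'aw => ->; rewrite set22.
by apply/set0Pn; exists v; rewrite inE vaw set21.
Qed.

Lemma ncolors_ge2 (T : finType) (e : rel T) (c : coloring T) E1 E2 :
  E1 \in edges e -> E2 \in edges e -> c E1 != c E2 -> 2 <= ncolors e c.
Proof.
move=> E1e E2e c12; rewrite /ncolors -[2]/(size [:: c E1; c E2]).
apply: uniq_leq_size; first by rewrite /= inE c12.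
by move=> y; rewrite !inE mem_undup => /orP[] /eqP ->; apply: map_f; rewrite mem_enum.
Qed.

Lemma k_proper_coloring_ncolors_ge2 (T : finType) (e : rel T) k (c : coloring T) :
  3 <= k <= #|T| -> k_proper_coloring e k c -> 2 <= ncolors e c.
Proof.
case/andP=> k_ge3 /card_geqP[q [q_uniq q_size _]] c_proper.
have S_card : #|[set v in q]| = k.
  by rewrite -q_size -(card_uniqP q_uniq); apply: eq_card => v; rewrite inE.
have [A [F [[Fe _ _ A_conn _] SA F_proper]]] := c_proper _ S_card.
have [E1 [E2 [E1F E2F E12 E12_meet]]] : exists E1 E2,
    [/\ E1 \in F, E2 \in F, E1 != E2 & E1 :&: E2 != set0].
  apply: connected_adjacent_edges A_conn _.
  by apply: leq_trans k_ge3 _; rewrite -S_card subset_leq_card.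
by apply: (ncolors_ge2 (E1 := E1) (E2 := E2)); [apply: subsetP Fe _ _ .. | apply: F_proper].
Qed.

Theorem mainTheorem4 (T : finType) (e : rel T)
  (e_sym : symmetric e) (e_irr : irreflexive e)
  (e_conn : connected_graph e)
  (n_ge3 : 3 <= #|T|) (Htr : traceable e) (k : nat)
  (hk : 3 <= k <= #|T|) :
  is_proper_index e k 2.
Proof.
split; last by move=> c; apply: k_proper_coloring_ncolors_ge2.
have [c [c_proper c_ncolors]] := traceable_two_coloring Htr n_ge3.
by exists c.
Qed.
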